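(* Let $G$ be an instance of the rank-maximal matchings problem (with last-resort posts added), let $M$ be a rank-maximal matching in $G$, and let $C$ be a directed cycle in the switching graph $G_M$. Then $w(C)=0$.
   Context: An instance is a bipartite graph $G=(\mathcal{A}\cup\mathcal{P},E)$, $\mathcal{A}$ a set of applicants, $\mathcal{P}$ a set of posts, with $E=E_1\cup\dots\cup E_r$ a disjoint union; $(a,p)\in E_i$ means $p$ is an $i$-th choice of $a$, written $\mathrm{rank}(a,p)=i$ (ties allowed). Each applicant $a$ is additionally given its own dummy last-resort post $\ell(a)$ with $(a,\ell(a))\in E_{r+1}$; the resulting instance with ranks $1,\dots,r+1$ is still called $G$. The signature of a matching $M$ is $(x_1,\dots,x_{r+1})$, $x_i$ the number of applicants matched along rank-$i$ edges; $M$ is rank-maximal if its signature is lexicographically maximum. Even/odd/unreachable: given a bipartite graph and a maximum matching $N$, a vertex is even (odd) if there is an even (odd) length $N$-alternating path from an $N$-unmatched vertex to it, unreachable otherwise; independent of the choice of $N$. Irving et al.'s algorithm: $G'_1=(\mathcal{A}\cup\mathcal{P},E_1)$, $M_1$ a maximum matching. For $i=1,\dots,r$: let $\mathcal{E}_i,\mathcal{O}_i,\mathcal{U}_i$ be the even/odd/unreachable vertices of $G'_i$; delete all edges of rank $>i$ incident to $\mathcal{O}_i\cup\mathcal{U}_i$; delete from $G'_i$ edges joining $\mathcal{O}_i$ to $\mathcal{O}_i\cup\mathcal{U}_i$; add the remaining edges of $E_{i+1}$ to get $G'_{i+1}$; let $M_{i+1}$ be a maximum matching of $G'_{i+1}$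 augmenting $M_i$. With $\mathcal{E}_{r+1},\mathcal{O}_{r+1},\mathcal{U}_{r+1}$ the even/odd/unreachable vertices of $G'_{r+1}$, the reduced graph $G'$ is $G'_{r+1}$ minus the edges joining $\mathcal{O}_{r+1}$ to $\mathcal{O}_{r+1}\cup\mathcal{U}_{r+1}$ (independent of choices). Switching graph: for a rank-maximal matching $M$ (which matches all applicants), $G_M$ is the directed graph on $\mathcal{P}$ with an edge $(p_i,p_j)$ whenever some applicant $a$ has $(a,p_i)\in M$ and $(a,p_j)\in E(G')$, with weight $w(p_i,p_j)=\mathrm{rank}(a,p_j)-\mathrm{rank}(a,p_i)$; the weight $w(C)$ of a cycle is the sum of its edge weights. *)

From mathcomp Require Import all_boot all_order all_algebra.
Set Implicit Arguments. Unset Strict Implicit. Unset Printing Implicit Defensive.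
Import GRing.Theory Num.Theory.

Section Bipartite.
Variables (A Q : finType).

Definition graph := A -> Q -> Prop.

Definition is_matching (H : graph) (N : {set A * Q}) : Prop :=
  [/\ (forall e, e \in N -> H e.1 e.2),
      (forall e f, e \in N -> f \in N -> e.1 = f.1 -> e = f) &
      (forall e f, e \in N -> f \in N -> e.2 = f.2 -> e = f)].

Definition is_max_matching (H : graph) (N : {set A * Q}) : Prop :=
  is_matching H N /\ forall N', is_matching H N' -> #|N'| <= #|N|.

Definition vadj (H : graph) (u v : A + Q) : Prop :=
  match u, v with
  | inl a, inr q => H a q
  | inr q, inl a => H a q
  | _, _ => False
  end.

Definition vinN (N : {set A * Q}) (u v : A + Q) : Prop :=
  vadj (fun a q => (a, q) \in N) u v.

Definition unmatched (N : {set A * Q}) (v : A + Q) : Prop :=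
  forall u, ~ vinN N v u.

(* v0 :: s is a (simple) N-alternating path in H whose first edge is not in N *)
Definition alt_path (H : graph) (N : {set A * Q}) (v0 : A + Q)
    (s : seq (A + Q)) : Prop :=
  uniq (v0 :: s) /\
  forall i, i < size s ->
    vadj H (nth v0 (v0 :: s) i) (nth v0 (v0 :: s) i.+1) /\
    (vinN N (nth v0 (v0 :: s) i) (nth v0 (v0 :: s) i.+1) <-> odd i).

(* even / odd / unreachable vertices (w.r.t. a maximum matching; the notion is
   independent of the chosen maximum matching) *)
Definition even_v (H : graph) (v : A + Q) : Prop :=
  exists N, is_max_matching H N /\
    exists v0 s, [/\ unmatched N v0, alt_path H N v0 s,
                     last v0 s = v & ~~ odd (size s)].

Definition odd_v (H : graph) (v : A + Q) : Prop :=
  exists N, is_max_matching H N /\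
    exists v0 s, [/\ unmatched N v0, alt_path H N v0 s,
                     last v0 s = v & odd (size s)].

Definition unreach_v (H : graph) (v : A + Q) : Prop :=
  ~ even_v H v /\ ~ odd_v H v.

Definition joins_OOU (H : graph) (a : A) (q : Q) : Prop :=
  (odd_v H (inl a) /\ (odd_v H (inr q) \/ unreach_v H (inr q))) \/
  (odd_v H (inr q) /\ (odd_v H (inl a) \/ unreach_v H (inl a))).

End Bipartite.

(* Applicants A, original posts P, ranks rk a p in 1..r (0 = no edge).
   Posts of the extended instance are P + A, inr a being the last-resort
   post l(a), with rank r+1 for a only. *)
Definition frk (A P : finType) (r : nat) (rk : A -> P -> nat) (a : A)
    (q : (P + A)%type) : nat :=
  match q with
  | inl p => rk a p
  | inr b => if a == b then r.+1 else 0
  end.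

Definition Gedge (A P : finType) (r : nat) (rk : A -> P -> nat) : graph A (P + A)%type :=
  fun a q => 0 < frk r rk a q.

Definition signature (A P : finType) (r : nat) (rk : A -> P -> nat)
    (M : {set A * (P + A)%type}) (i : nat) : nat :=
  #|[set e in M | frk r rk e.1 e.2 == i]|.

Definition lex_lt (n : nat) (s t : nat -> nat) : Prop :=
  exists i, [/\ 1 <= i <= n, (forall j, 1 <= j < i -> s j = t j) & s i < t i].

Definition rank_maximal (A P : finType) (r : nat) (rk : A -> P -> nat)
    (M : {set A * (P + A)%type}) : Prop :=
  is_matching (Gedge r rk) M /\
  ~ exists M', is_matching (Gedge r rk) M' /\
               lex_lt r.+1 (signature r rk M) (signature r rk M').

(* Irving et al.'s algorithm.  irving_stage i = (G'_{i+1}, alive_i), where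
   alive_i is the set of edges not deleted in stages 1..i. *)
Fixpoint irving_stage (A P : finType) (r : nat) (rk : A -> P -> nat) (i : nat)
  : graph A (P + A)%type * graph A (P + A)%type :=
  match i with
  | 0 => (fun a q => frk r rk a q = 1, fun _ _ => True)
  | i'.+1 =>
      let HAl := irving_stage r rk i' in
      let H := HAl.1 in
      let Al := HAl.2 in
      let OU := fun v => odd_v H v \/ unreach_v H v in
      (* stage i := i'.+1 : delete edges of rank > i incident to O_i \cup U_i *)
      let Al' := fun a q =>
         Al a q /\ ~ (i'.+1 < frk r rk a q /\ (OU (inl a) \/ OU (inr q))) in
      ((fun a q => (H a q /\ ~ joins_OOU H a q) \/
                   (frk r rk a q = i'.+2 /\ Al' a q)),
       Al')
  end.

Definition reduced_graph (A P : finType) (r : nat) (rk : A -> P -> nat)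
  : graph A (P + A)%type :=
  let H := (irving_stage r rk r).1 in
  fun a q => H a q /\ ~ joins_OOU H a q.

(* edge (p, q) of the switching graph G_M, realised by applicant a *)
Definition sw_edge (A P : finType) (r : nat) (rk : A -> P -> nat)
    (M : {set A * (P + A)%type}) (a : A) (p q : (P + A)%type) : Prop :=
  (a, p) \in M /\ reduced_graph r rk a q.

Definition sw_weight (A P : finType) (r : nat) (rk : A -> P -> nat)
    (a : A) (p q : (P + A)%type) : int :=
  ((frk r rk a q)%:Z - (frk r rk a p)%:Z)%R.

(* Switching M along C replaces the edges (a_i, p_i) by the edges
   (a_i, p_(i+1)) of the reduced graph G'; the result M' is again a matching
   covering every vertex M covers, and w(C) is the total rank of M' minus
   that of M.  By Irving et al.'s invariant, the edges of M of rank at most i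
   form a maximum matching of G'_i.  The Gallai-Edmonds decomposition of G'_i
   provides a vertex cover (odd or unreachable applicants, odd posts) whose
   size is the matching number, and M', whose edges all survive into G',
   matches that cover with edges of rank at most i none of which lies inside
   it; hence M' has at least as many edges of rank at most i as M, for every
   i.  Rank-maximality of M turns all these inequalities into equalities, so
   M and M' have the same total rank and w(C) = 0.  Since the parity classes
   are defined through some maximum matching, the Gallai-Edmonds facts are
   derived from König's theorem: the König cover built from one maximum
   matching is tight for every maximum matching. *)

From mathcomp Require Import all_boot all_order all_algebra zify boolp.
Import GRing.Theory Num.Theory.

Set Implicit Arguments.
Unset Strict Implicit.
Unset Printing Implicit Defensive.

Section BipartiteMatchings.
Context {A Q : finType}.
Implicit Types (H : graph A Q) (N Z : {set A * Q}) (e f g : A * Q) (u v w z : A + Q).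

Definition side v : bool := if v is inl _ then true else false.

Definition incident e v : Prop := v = inl e.1 \/ v = inr e.2.

Definition edge_between u w : option (A * Q) :=
  match u, w with
  | inl a, inr q | inr q, inl a => Some (a, q)
  | _, _ => None
  end.

Definition disjoint_edges N : Prop :=
  forall e f v, e \in N -> f \in N -> incident e v -> incident f v -> e = f.

Lemma edge_betweenP u w e : edge_between u w = Some e ->
  [/\ incident e u, incident e w & side u != side w].
Proof.
by case: u => [a|q]; case: w => [b|p] //= [<-]; split => //; rewrite /incident /=; auto.
Qed.

Lemma edge_between_incident u w e z : edge_between u w = Some e ->
  incident e z -> z = u \/ z = w.
Proof. by case: u => [a|q]; case: w => [b|p] //= [<-] [] ->; auto. Qed.

Lemma edge_between_injr u w w' e :
  edge_between u w = Some e -> edge_between u w' = Some e -> w = w'.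
Proof.
by case: u => [a|q]; case: w => [b|p]; case: w' => [b'|p'] //= [<-] [] *; subst.
Qed.

Lemma incident_edge_between e v :
  incident e v -> exists w, edge_between v w = Some e.
Proof. by case: e => a q [] ->; [exists (inr q) | exists (inl a)]. Qed.

Lemma incident_inl e a : incident e (inl a) -> e.1 = a.
Proof. by case=> // [[->]]. Qed.

Lemma incident_inr e q : incident e (inr q) -> e.2 = q.
Proof. by case=> // [[->]]. Qed.

Lemma vadjE H u w : vadj H u w <-> exists e, edge_between u w = Some e /\ H e.1 e.2.
Proof.
case: u => [a|q]; case: w => [b|p] /=; split => //; try by case=> e [].
- by exists (a, p).
- by case=> e [[<-]].
- by exists (b, q).
- by case=> e [[<-]].
Qed.

Lemma vinNE N u w : vinN N u w <-> exists e, edge_between u w = Some e /\ e \in N.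
Proof. by rewrite /vinN vadjE; split; case=> [[a q]] [h1 h2]; exists (a, q). Qed.

Lemma vinN_edge_between N u w e :
  edge_between u w = Some e -> vinN N u w <-> e \in N.
Proof.
move=> he; rewrite vinNE; split; last by exists e.
by case=> e' [he' ?]; rewrite he in he'; case: he' => ->.
Qed.

Lemma vadj_side H u w : vadj H u w -> side u != side w.
Proof. by case: u; case: w. Qed.

Lemma vadj_sym H u w : vadj H u w -> vadj H w u.
Proof. by case: u; case: w. Qed.

Lemma vinN_sym N u w : vinN N u w -> vinN N w u.
Proof. exact: vadj_sym. Qed.

Lemma vinN_vadj H N u w : is_matching H N -> vinN N u w -> vadj H u w.
Proof. by move=> [hH _ _]; case: u => [a|q]; case: w => [b|p] //= /hH. Qed.

Lemma matching_edge H N e : is_matching H N -> e \in N -> H e.1 e.2.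
Proof. by case=> hH _ _ /hH. Qed.

Lemma matching_disjoint H N : is_matching H N -> disjoint_edges N.
Proof. by move=> [_ h1 h2] e f v he hf [->|->] [] // [] ?; [apply: h1 | apply: h2]. Qed.

Lemma vinN_mate_uniq H N x y y' : is_matching H N ->
  vinN N x y -> vinN N x y' -> y = y'.
Proof.
move=> hN /vinNE [e [he eN]] /vinNE [f [hf fN]].
have [xe _ _] := edge_betweenP he; have [xf _ _] := edge_betweenP hf.
have ef := matching_disjoint hN eN fN xe xf; subst f.
exact: edge_between_injr he hf.
Qed.

Lemma disjoint_matching H N :
  {in N, forall e, H e.1 e.2} -> disjoint_edges N -> is_matching H N.
Proof.
move=> hH hN; split => // e f he hf ef.
- by apply: (hN e f (inl e.1)) => //; [left | left; rewrite ef].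
- by apply: (hN e f (inr e.2)) => //; [right | right; rewrite ef].
Qed.

Lemma disjoint_edgesS N N' : N' \subset N -> disjoint_edges N -> disjoint_edges N'.
Proof. by move=> /subsetP sub hN e f v /sub eN /sub fN; exact: hN. Qed.

Lemma unmatchedE N v : unmatched N v <-> forall e, e \in N -> ~ incident e v.
Proof.
split.
- by move=> h [a q] he [] /= hv; subst v; [apply: (h (inr q)) | apply: (h (inl a))].
- by move=> h u /vinNE [e [/edge_betweenP [ev _ _] he]]; exact: h e he ev.
Qed.

Lemma unmatched_notin N v e : unmatched N v -> incident e v -> e \notin N.
Proof. by move/unmatchedE => hv ev; apply/negP => /hv. Qed.

Lemma matchedE N v : ~ unmatched N v <-> exists2 e, e \in N & incident e v.
Proof.
rewrite unmatchedE; split; last by case=> e he ev /(_ e he).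
by move=> /existsNP [e /not_implyP [he /contrapT ev]]; exists e.
Qed.

Lemma matched_sub N N' v : N' \subset N -> ~ unmatched N' v -> ~ unmatched N v.
Proof. by move=> /subsetP sub /matchedE [e /sub eN ev]; apply/matchedE; exists e. Qed.

Lemma matched_fst N a : ~ unmatched N (inl a) -> exists2 e, e \in N & e.1 = a.
Proof. by case/matchedE => e he /incident_inl; exists e. Qed.

Lemma matched_snd N q : ~ unmatched N (inr q) -> exists2 e, e \in N & e.2 = q.
Proof. by case/matchedE => e he /incident_inr; exists e. Qed.

Lemma matching_add H Z u w e : is_matching H Z -> H e.1 e.2 ->
  edge_between u w = Some e -> unmatched Z u -> unmatched Z w ->
  is_matching H (e |: Z).
Proof.
move=> hZ he huw /unmatchedE hu /unmatchedE hw.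
have fresh f z : f \in Z -> incident e z -> ~ incident f z.
  by move=> hf /(edge_between_incident huw) [] ->; [exact: hu | exact: hw].
apply: disjoint_matching => [f|f g z].
  by rewrite in_setU1 => /predU1P [-> //|]; exact: matching_edge.
rewrite !in_setU1 => /predU1P [->|hf] /predU1P [->|hg] // fz gz.
- by case: (fresh g z hg fz).
- by case: (fresh f z hf gz).
- exact: matching_disjoint hZ _ _ _ hf hg fz gz.
Qed.

Lemma matching_swap H Z u w e f : is_matching H Z -> H e.1 e.2 ->
  edge_between u w = Some e -> unmatched Z u -> f \in Z -> incident f w ->
  is_matching H (e |: (Z :\ f)).
Proof.
move=> hZ he huw /unmatchedE hu hf fw.
have fresh g z : g \in Z :\ f -> incident e z -> ~ incident g z.
  rewrite in_setD1 => /andP [/eqP gf hg] /(edge_between_incident huw) [] -> gz.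
    exact: hu hg gz.
  exact/gf/(matching_disjoint hZ hg hf gz fw).
apply: disjoint_matching => [g|g g' z].
  by rewrite in_setU1 in_setD1 => /predU1P [-> //| /andP [_]]; exact: matching_edge.
rewrite !in_setU1 => /predU1P [->|hg] /predU1P [->|hg'] // gz g'z.
- by case: (fresh g' z hg' gz).
- by case: (fresh g z hg g'z).
- move: hg hg'; rewrite !in_setD1 => /andP [_ hg] /andP [_ hg'].
  exact: matching_disjoint hZ _ _ _ hg hg' gz g'z.
Qed.

Lemma card_swap Z e f : e \notin Z -> f \in Z -> #|e |: (Z :\ f)| = #|Z|.
Proof.
move=> eZ fZ; rewrite cardsU1 in_setD1 (negPf eZ) andbF (cardsD1 f Z) fZ.
by rewrite add1n.
Qed.

End BipartiteMatchings.

Section AlternatingPaths.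
Context {A Q : finType}.
Implicit Types (H : graph A Q) (N Z : {set A * Q}) (e f g : A * Q) (u v w z : A + Q).

Definition alt_reachable H N v0 v := exists s, alt_path H N v0 s /\ last v0 s = v.

Lemma alt_path_edge H N v0 s i : alt_path H N v0 s -> i < size s ->
  vadj H (nth v0 (v0 :: s) i) (nth v0 (v0 :: s) i.+1) /\
  (vinN N (nth v0 (v0 :: s) i) (nth v0 (v0 :: s) i.+1) <-> odd i).
Proof. by case=> _ h /h. Qed.

Lemma alt_path_uniq H N v0 s : alt_path H N v0 s -> uniq (v0 :: s).
Proof. by case. Qed.

Lemma alt_path_side H N v0 s i : alt_path H N v0 s -> i <= size s ->
  side (nth v0 (v0 :: s) i) = side v0 (+) odd i.
Proof.
move=> hp; elim: i => [|i IH] hi; first by rewrite addbF.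
have /vadj_side := (alt_path_edge hp hi).1.
by rewrite IH ?(ltnW hi) //=; case: side; case: side; case: odd.
Qed.

Lemma alt_path_parity H N v0 s : alt_path H N v0 s ->
  odd (size s) = (side v0 != side (last v0 s)).
Proof.
by move=> hp; rewrite (last_nth v0) (alt_path_side hp) //; case: side; case: odd.
Qed.

Lemma alt_path_take H N v0 s n : alt_path H N v0 s -> alt_path H N v0 (take n s).
Proof.
move=> hp; split; first exact: (take_uniq n.+1 (alt_path_uniq hp)).
move=> i; rewrite size_take => hi.
have [his hin] : i < size s /\ i < n by move: hi; case: ifP => h1 h2; lia.
rewrite -[v0 :: take n s]/(take n.+1 (v0 :: s)) !nth_take ?ltnS ?(ltnW hin) //.
exact: alt_path_edge.
Qed.

Lemma alt_path_rcons H N v0 s w : alt_path H N v0 s -> w \notin v0 :: s ->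
  vadj H (last v0 s) w -> (vinN N (last v0 s) w <-> odd (size s)) ->
  alt_path H N v0 (rcons s w).
Proof.
move=> hp hw ha hn; split; first by rewrite -rcons_cons rcons_uniq hw (alt_path_uniq hp).
move=> i; rewrite size_rcons ltnS leq_eqVlt => /predU1P [->|hi].
  by rewrite -rcons_cons !nth_rcons /= ltnS leqnn ltnn eqxx -(last_nth v0).
rewrite -rcons_cons !nth_rcons /= !ltnS hi (ltnW hi); exact: alt_path_edge.
Qed.

Lemma alt_path_mem_reachable H N v0 s w :
  alt_path H N v0 s -> w \in v0 :: s -> alt_reachable H N v0 w.
Proof.
move=> hp hw; have hi : index w (v0 :: s) <= size s by rewrite -ltnS index_mem.
exists (take (index w (v0 :: s)) s); split; first exact: alt_path_take.
rewrite (last_nth v0) size_takel //.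
by rewrite -[v0 :: take _ s]/(take (index w (v0 :: s)).+1 (v0 :: s)) nth_take // nth_index.
Qed.

Lemma alt_reachable_extend H N v0 s w :
  alt_path H N v0 s -> vadj H (last v0 s) w ->
  (vinN N (last v0 s) w <-> odd (size s)) -> alt_reachable H N v0 w.
Proof.
move=> hp ha hn; have [hw|hw] := boolP (w \in v0 :: s).
  exact: alt_path_mem_reachable hp hw.
by exists (rcons s w); rewrite last_rcons; split => //; exact: alt_path_rcons.
Qed.

Lemma alt_path_even_mate H N v0 s w : is_matching H N -> unmatched N v0 ->
  alt_path H N v0 s -> ~~ odd (size s) -> vinN N (last v0 s) w -> w \in v0 :: s.
Proof.
move=> hN hu hp.
case/lastP: s hp => [|s u] hp; first by move=> _ /hu.
rewrite last_rcons size_rcons /= negbK => hodd huw.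
have hi : size s < size (rcons s u) by rewrite size_rcons.
have /(_ hodd) := proj2 (proj2 (alt_path_edge hp hi)).
rewrite -rcons_cons nth_rcons /= ltnS leqnn -(last_nth v0) nth_rcons ltnn eqxx.
move=> /vinN_sym hus; rewrite (vinN_mate_uniq hN huw hus).
by rewrite -rcons_cons mem_rcons in_cons mem_last orbT.
Qed.

Lemma alt_reachable_even_step H N v0 s w : is_matching H N -> unmatched N v0 ->
  alt_path H N v0 s -> ~~ odd (size s) -> vadj H (last v0 s) w ->
  alt_reachable H N v0 w.
Proof.
move=> hN hu hp he ha; have [hin|hin] := EM (vinN N (last v0 s) w).
  exact: alt_path_mem_reachable hp (alt_path_even_mate hN hu hp he hin).
by apply: alt_reachable_extend hp ha _; split => // ho; rewrite ho in he.
Qed.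

Lemma alt_reachable_odd_step H N v0 s w : is_matching H N ->
  alt_path H N v0 s -> odd (size s) -> vinN N (last v0 s) w ->
  alt_reachable H N v0 w.
Proof. by move=> hN hp ho hin; apply: alt_reachable_extend hp (vinN_vadj hN hin) _. Qed.

Lemma alt_path_behead2 H N N' v0 v1 v2 s : alt_path H N v0 [:: v1, v2 & s] ->
  (forall x y g, x \in v2 :: s -> y \in v2 :: s -> edge_between x y = Some g ->
     (g \in N') = (g \in N)) ->
  alt_path H N' v2 s.
Proof.
move=> hp hNN'; split; first by have /= /and3P [_ _] := alt_path_uniq hp.
move=> i hi.
have [ha hn] := alt_path_edge hp (hi : i.+2 < size [:: v1, v2 & s]).
rewrite -[nth v0 _ i.+2]/(nth v0 (v2 :: s) i) -[nth v0 _ i.+3]/(nth v0 (v2 :: s) i.+1) in ha hn.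
rewrite !(set_nth_default v2) ?(ltnS, ltnW hi) // in ha hn *.
split=> //; have /vadjE [g [hg _]] := ha.
rewrite !(vinN_edge_between _ hg) in hn *.
by rewrite (hNN' _ _ _ _ _ hg) ?mem_nth ?ltnS ?(ltnW hi) //= negbK in hn *.
Qed.

(* Z' flips the first two edges of the path. *)
Lemma alt_path_flip2 H Z v0 v1 v2 s : is_matching H Z -> unmatched Z v0 ->
  alt_path H Z v0 [:: v1, v2 & s] -> unmatched Z (last v2 s) ->
  exists Z', [/\ is_matching H Z', #|Z'| = #|Z|, unmatched Z' v2,
                 unmatched Z' (last v2 s) & alt_path H Z' v2 s].
Proof.
move=> hZ hu hp hl.
have /vadjE [e [he eH]] := (alt_path_edge (i := 0) hp erefl).1.
have /vinNE [f [hf fZ]] := (alt_path_edge (i := 1) hp erefl).2.2 isT.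
rewrite /= in he hf.
have [u0e _ _] := edge_betweenP he; have [u1f u2f _] := edge_betweenP hf.
have eZ := unmatched_notin hu u0e.
move: (alt_path_uniq hp); rewrite /= !in_cons !negb_or.
move=> /andP [/and3P [_ n02 n0s] /andP [/andP [n12 n1s] _]].
have off x : x \in v2 :: s -> x != v0 /\ x != v1.
  rewrite in_cons => /predU1P [->|xs]; first by rewrite eq_sym n02 eq_sym n12.
  by split; apply/negP => /eqP hx; subst x; [rewrite xs in n0s | rewrite xs in n1s].
set Z' := e |: (Z :\ f).
have tailZ' x y g : x \in v2 :: s -> y \in v2 :: s ->
    edge_between x y = Some g -> (g \in Z') = (g \in Z).
  move=> /off [x0 x1] /off [y0 y1] hg.
  have off_g w' : incident g w' -> w' != v0 /\ w' != v1.
    by case/(edge_between_incident hg) => ->; split.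
  have ge : g != e by apply/eqP => ge; subst g; have [] := off_g v0 u0e; rewrite eqxx.
  have gf : g != f by apply/eqP => gf; subst g; have [_] := off_g v1 u1f; rewrite eqxx.
  by rewrite /Z' in_setU1 in_setD1 (negPf ge) gf.
exists Z'; split.
- exact: matching_swap hZ eH he hu fZ u1f.
- exact: card_swap eZ fZ.
- apply/unmatchedE => g; rewrite in_setU1 in_setD1 => /predU1P [->|/andP [/eqP gf gZ]] g2.
    by case: (edge_between_incident he g2) => hv; [rewrite hv eqxx in n02 | rewrite hv eqxx in n12].
  exact/gf/(matching_disjoint hZ gZ fZ g2 u2f).
- apply/unmatchedE => g; have /off [l0 l1] := mem_last v2 s.
  rewrite in_setU1 in_setD1 => /predU1P [->|/andP [_ gZ]] gl.
    by case: (edge_between_incident he gl) => hv; [rewrite hv eqxx in l0 | rewrite hv eqxx in l1].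
  by move: gZ; rewrite (negPf (unmatched_notin hl gl)).
- exact: alt_path_behead2 hp tailZ'.
Qed.

Lemma augmenting_path H Z v0 s : is_matching H Z -> unmatched Z v0 ->
  alt_path H Z v0 s -> odd (size s) -> unmatched Z (last v0 s) ->
  exists Z', is_matching H Z' /\ #|Z| < #|Z'|.
Proof.
elim: {s}(size s) {-2}s (leqnn (size s)) Z v0 => [|n IH] [|v1 s] //= hn Z v0 hZ hu hp ho hl.
case: s hn ho hp hl => [|v2 s] hn ho hp hl.
  have /vadjE [e [he eH]] := (alt_path_edge (i := 0) hp erefl).1.
  have [ue _ _] := edge_betweenP he.
  have eZ := unmatched_notin hu ue.
  exists (e |: Z); split; first exact: matching_add hZ eH he hu hl.
  by rewrite cardsU1 eZ.
have [Z' [hZ' cardZ' hu2 hl2 hp2]] := alt_path_flip2 hZ hu hp hl.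
have ho2 : odd (size s) by move: ho; rewrite /= negbK.
have [Z'' [hZ'' lt]] := IH s (ltnW hn) Z' v2 hZ' hu2 hp2 ho2 hl2.
by exists Z''; rewrite -cardZ'.
Qed.

End AlternatingPaths.

Section MaximumMatchings.
Context {A Q : finType}.
Implicit Types (H : graph A Q) (N Z : {set A * Q}) (e f g : A * Q) (u v w z : A + Q).

Lemma exists_max_matching H : exists N, is_max_matching H N.
Proof.
have m0 : `[< is_matching H set0 >].
  by apply/asboolP/disjoint_matching => [e|e f v]; rewrite inE.
case: (@arg_maxnP _ set0 (fun N => `[< is_matching H N >]) (fun N => #|N|) m0).
move=> N /asboolP hN hmax.
by exists N; split => // N' /asboolP /hmax.
Qed.

Lemma max_matching_no_augmenting H Z v0 s : is_max_matching H Z ->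
  unmatched Z v0 -> alt_path H Z v0 s -> odd (size s) -> ~ unmatched Z (last v0 s).
Proof.
move=> [hZ hmax] hu hp ho hl.
have [Z' [hZ' lt]] := augmenting_path hZ hu hp ho hl.
by move: (hmax Z' hZ'); rewrite leqNgt lt.
Qed.

Lemma max_matching_exchange H N Z v : is_matching H N -> is_max_matching H Z ->
  ~ unmatched N v -> unmatched Z v ->
  exists2 Z', is_max_matching H Z' & #|N :\: Z'| < #|N :\: Z|.
Proof.
move=> hN [hZ hmax] /matchedE [e eN ev] hv.
have [w hvw] := incident_edge_between ev.
have [_ ew _] := edge_betweenP hvw.
have eH := matching_edge hN eN.
have eZ := unmatched_notin hv ev.
have /matchedE [f fZ fw] : ~ unmatched Z w.
  move=> hw; have := hmax _ (matching_add hZ eH hvw hv hw).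
  by rewrite cardsU1 eZ ltnn.
have fN : f \notin N.
  by apply/negP => fN; have ef := matching_disjoint hN eN fN ew fw; rewrite ef fZ in eZ.
exists (e |: (Z :\ f)).
  split; first exact: matching_swap hZ eH hvw hv fZ fw.
  by move=> N' /hmax; rewrite card_swap.
rewrite (cardsD1 e (N :\: Z)) in_setD eZ eN add1n ltnS subset_leq_card //.
apply/subsetP => g; rewrite !inE negb_or negb_and.
case/andP => /andP [ge /orP [/negPn /eqP gf|gZ]] gN; last by rewrite ge gZ gN.
by rewrite -gf gN in fN.
Qed.

Lemma max_matching_covering H N Z : is_matching H N -> is_max_matching H Z ->
  exists2 Z', is_max_matching H Z' & forall v, ~ unmatched N v -> ~ unmatched Z' v.
Proof.
move=> hN; elim: {Z}#|N :\: Z| {-2}Z (leqnn #|N :\: Z|) => [|n IH] Z hn hZ.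
  exists Z => // v /matchedE [e eN ev] hv.
  have : e \in N :\: Z.
    by rewrite in_setD eN (unmatched_notin hv ev).
  by move: hn; rewrite leqn0 cards_eq0 => /eqP ->; rewrite inE.
have [covered|] := EM (forall v, ~ unmatched N v -> ~ unmatched Z v).
  by exists Z.
move=> /existsNP [v /not_implyP [vN /contrapT vZ]].
have [Z' hZ' lt] := max_matching_exchange hN hZ vN vZ.
exact: IH Z' (leq_trans lt hn) hZ'.
Qed.

End MaximumMatchings.

Section VertexCovers.
Context {A Q : finType}.
Implicit Types (X Y : {set A * Q}) (KA : {set A}) (KQ : {set Q}).

Lemma vertex_cover_card X KA KQ : disjoint_edges X ->
  (forall e, e \in X -> e.1 \in KA \/ e.2 \in KQ) ->
  #|X| <= #|KA| + #|KQ| /\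
  (#|KA| + #|KQ| <= #|X| ->
   [/\ forall a, a \in KA -> exists2 e, e \in X & e.1 = a,
       forall q, q \in KQ -> exists2 e, e \in X & e.2 = q &
       forall e, e \in X -> ~ (e.1 \in KA /\ e.2 \in KQ)]).
Proof.
move=> hX hC.
set X1 := [set e in X | e.1 \in KA]; set X2 := [set e in X | e.2 \in KQ].
have X12 : X = X1 :|: X2.
  apply/setP => e; rewrite !inE; apply/idP/idP; last by case/orP => /andP [].
  by move=> eX; rewrite eX; case: (hC e eX) => ->; rewrite ?orbT.
have inj1 : {in X1 &, injective fst}.
  move=> e f; rewrite !inE => /andP [eX _] /andP [fX _] ef.
  by apply: (hX e f (inl e.1)) => //; [left | left; rewrite ef].
have inj2 : {in X2 &, injective snd}.
  move=> e f; rewrite !inE => /andP [eX _] /andP [fX _] ef.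
  by apply: (hX e f (inr e.2)) => //; [right | right; rewrite ef].
have s1 : fst @: X1 \subset KA by apply/subsetP => a /imsetP [e]; rewrite inE => /andP [_ ?] ->.
have s2 : snd @: X2 \subset KQ by apply/subsetP => q /imsetP [e]; rewrite inE => /andP [_ ?] ->.
have c1 := subset_leq_card s1; rewrite card_in_imset // in c1.
have c2 := subset_leq_card s2; rewrite card_in_imset // in c2.
have cU := cardsUI X1 X2; rewrite -X12 in cU.
split; first by move: c1 c2 cU; move: #|X| #|X1| #|X2| #|X1 :&: X2|; lia.
move=> hle; have [e1 e2 e3] : [/\ #|X1| = #|KA|, #|X2| = #|KQ| & #|X1 :&: X2| = 0].
  by move: c1 c2 cU hle; move: #|X| #|X1| #|X2| #|X1 :&: X2| => *; split; lia.
have eA : fst @: X1 = KA by apply/eqP; rewrite eqEcard s1 card_in_imset // e1 leqnn.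
have eQ : snd @: X2 = KQ by apply/eqP; rewrite eqEcard s2 card_in_imset // e2 leqnn.
split.
- by move=> a; rewrite -eA => /imsetP [e]; rewrite inE => /andP [eX _] ->; exists e.
- by move=> q; rewrite -eQ => /imsetP [e]; rewrite inE => /andP [eX _] ->; exists e.
- move=> e eX [h1 h2]; move/eqP: e3; rewrite cards_eq0 => /eqP /setP /(_ e).
  by rewrite !inE eX h1 h2.
Qed.

Lemma vertex_cover_le_card Y KA KQ :
  (forall a, a \in KA -> exists2 e, e \in Y & e.1 = a) ->
  (forall q, q \in KQ -> exists2 e, e \in Y & e.2 = q) ->
  (forall e, e \in Y -> ~ (e.1 \in KA /\ e.2 \in KQ)) ->
  #|KA| + #|KQ| <= #|Y|.
Proof.
move=> hA hQ hD.
set Y1 := [set e in Y | e.1 \in KA]; set Y2 := [set e in Y | e.2 \in KQ].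
have s1 : KA \subset fst @: Y1.
  apply/subsetP => a aK; have [e eY ea] := hA a aK.
  by apply/imsetP; exists e; rewrite // inE eY ea aK.
have s2 : KQ \subset snd @: Y2.
  apply/subsetP => q qK; have [e eY eq] := hQ q qK.
  by apply/imsetP; exists e; rewrite // inE eY eq qK.
have c1 := leq_trans (subset_leq_card s1) (leq_imset_card _ _).
have c2 := leq_trans (subset_leq_card s2) (leq_imset_card _ _).
have d : Y1 :&: Y2 = set0.
  apply/setP => e; rewrite !inE; apply/negP => /andP [/andP [eY h1] /andP [_ h2]].
  exact: (hD e eY).
have cU := cardsUI Y1 Y2; rewrite d cards0 addn0 in cU.
have c3 : #|Y1 :|: Y2| <= #|Y|.
  by apply/subset_leq_card/subsetP => e; rewrite !inE => /orP [] /andP [].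
by move: c1 c2 cU c3; move: #|Y| #|Y1| #|Y2| #|Y1 :|: Y2|; lia.
Qed.

End VertexCovers.

Section KonigCover.
Context {A Q : finType}.
Implicit Types (H : graph A Q) (N Z : {set A * Q}) (u v w : A + Q).

Definition reachable_from_side H Z b v := exists v0 s,
  [/\ side v0 = b, unmatched Z v0, alt_path H Z v0 s & last v0 s = v].

(* For a maximum matching Z this is König's minimum vertex cover. *)
Definition konig_cover H Z b v :=
  (side v = b /\ ~ reachable_from_side H Z b v) \/
  (side v != b /\ reachable_from_side H Z b v).

Definition konig_A H Z b : {set A} := [set a | `[< konig_cover H Z b (inl a) >]].
Definition konig_Q H Z b : {set Q} := [set q | `[< konig_cover H Z b (inr q) >]].

Lemma mem_konig_A H Z b a : a \in konig_A H Z b <-> konig_cover H Z b (inl a).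
Proof. by rewrite inE; split => /asboolP. Qed.

Lemma mem_konig_Q H Z b q : q \in konig_Q H Z b <-> konig_cover H Z b (inr q).
Proof. by rewrite inE; split => /asboolP. Qed.

Lemma side_flip (x y b : bool) : x != y -> x != b -> y = b.
Proof. by case: x; case: y; case: b. Qed.

Lemma konig_cover_edge H Z b u w : is_matching H Z -> vadj H u w ->
  konig_cover H Z b u \/ konig_cover H Z b w.
Proof.
move=> hZ.
suff main u' w' : side u' = b -> vadj H u' w' ->
    konig_cover H Z b u' \/ konig_cover H Z b w'.
  have [/eqP ub|ub] := boolP (side u == b) => huw; first exact: main.
  by case: (main w u (side_flip (vadj_side huw) ub) (vadj_sym huw)); auto.
move=> ub huw; have [ru|] := EM (reachable_from_side H Z b u'); last by left; left.
case: ru => v0 [s [v0b hu hp hl]]; right; right.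
split; first by rewrite -ub eq_sym; exact: vadj_side huw.
have ev : ~~ odd (size s) by rewrite (alt_path_parity hp) hl v0b ub eqxx.
have huw' : vadj H (last v0 s) w' by rewrite hl.
have [s' [hp' hl']] := alt_reachable_even_step hZ hu hp ev huw'.
by exists v0, s'.
Qed.

Lemma konig_cover_matched_edge H Z b u w : is_matching H Z -> vinN Z u w ->
  ~ (konig_cover H Z b u /\ konig_cover H Z b w).
Proof.
move=> hZ.
suff main u' w' : side u' = b -> vinN Z u' w' ->
    ~ (konig_cover H Z b u' /\ konig_cover H Z b w').
  have [/eqP ub|ub] := boolP (side u == b) => huw; first exact: main.
  have wb := side_flip (vadj_side (vinN_vadj hZ huw)) ub.
  by case=> ku kw; exact: main w u wb (vinN_sym huw) (conj kw ku).
move=> ub huw [ku kw].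
have wb : side w' != b by rewrite -ub eq_sym; exact: vadj_side (vinN_vadj hZ huw).
case: ku => [[_ nru]|[]]; last by rewrite ub eqxx.
case: kw => [[wb' _]|[_ [v0 [s [v0b hu hp hl]]]]]; first by rewrite wb' eqxx in wb.
have ho : odd (size s) by rewrite (alt_path_parity hp) hl v0b eq_sym.
have hwu : vinN Z (last v0 s) u' by rewrite hl; exact: vinN_sym.
have [s' [hp' hl']] := alt_reachable_odd_step hZ hp ho hwu.
by apply: nru; exists v0, s'.
Qed.

Lemma konig_cover_matched H Z b v : is_max_matching H Z ->
  konig_cover H Z b v -> ~ unmatched Z v.
Proof.
move=> hZ [[vb nr]|[vb [v0 [s [v0b hu hp hl]]]]] hv.
  by apply: nr; exists v, [::]; split.
have ho : odd (size s) by rewrite (alt_path_parity hp) hl v0b eq_sym.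
by apply: (max_matching_no_augmenting hZ hu hp ho); rewrite hl.
Qed.

Lemma konig_cover_covers H Z b e : is_matching H Z -> H e.1 e.2 ->
  e.1 \in konig_A H Z b \/ e.2 \in konig_Q H Z b.
Proof.
move=> hZ; case: e => a q /= he.
case: (konig_cover_edge b hZ (he : vadj H (inl a) (inr q))) => hk.
  by left; apply/mem_konig_A.
by right; apply/mem_konig_Q.
Qed.

Lemma card_konig_cover H Z b : is_max_matching H Z ->
  #|konig_A H Z b| + #|konig_Q H Z b| <= #|Z|.
Proof.
move=> hZ; apply: vertex_cover_le_card => [a|q|[a q] eZ [/= ha hq]].
- by move/mem_konig_A/(konig_cover_matched hZ)/matched_fst.
- by move/mem_konig_Q/(konig_cover_matched hZ)/matched_snd.
- move/mem_konig_A: ha => ha; move/mem_konig_Q: hq => hq.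
  have hin : vinN Z (inl a) (inr q) := eZ.
  exact: konig_cover_matched_edge hZ.1 hin (conj ha hq).
Qed.

(* Since all maximum matchings have the size of the König cover of Z, that
   cover is tight for each of them. *)
Lemma konig_cover_tight H Z N b : is_max_matching H Z -> is_max_matching H N ->
  (forall v, konig_cover H Z b v -> ~ unmatched N v) /\
  (forall u w, vinN N u w -> ~ (konig_cover H Z b u /\ konig_cover H Z b w)).
Proof.
move=> hZ [hN Nmax].
have hcov e : e \in N -> e.1 \in konig_A H Z b \/ e.2 \in konig_Q H Z b.
  by move=> eN; apply: konig_cover_covers hZ.1 (matching_edge hN eN).
have [_ tight] := vertex_cover_card (matching_disjoint hN) hcov.
have [coverA coverQ inner] := tight (leq_trans (card_konig_cover b hZ) (Nmax _ hZ.1)).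
split.
- case=> [a|q] hk; apply/matchedE.
    have [e eN ea] := coverA a (proj2 (mem_konig_A _ _ _ _) hk).
    by exists e; [|left; rewrite ea].
  have [e eN eq] := coverQ q (proj2 (mem_konig_Q _ _ _ _) hk).
  by exists e; [|right; rewrite eq].
- case=> [a|q] [a'|q'] //= hin [hk hk'];
    by apply: (inner _ hin); split; [apply/mem_konig_A | apply/mem_konig_Q].
Qed.

Lemma even_end_not_konig H Z N b v0 s : is_max_matching H Z ->
  is_max_matching H N -> unmatched N v0 -> alt_path H N v0 s ->
  ~~ odd (size s) -> ~ konig_cover H Z b (last v0 s).
Proof.
move=> hZ hN hu hp ev.
have [Ncov Ninner] := konig_cover_tight b hZ hN.
suff even_pos j : j.*2 <= size s -> ~ konig_cover H Z b (nth v0 (v0 :: s) j.*2).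
  have half : (size s)./2.*2 = size s.
    by rewrite -{2}(odd_double_half (size s)) (negPf ev).
  by rewrite (last_nth v0) -half; apply: even_pos; rewrite half.
elim: j => [|j IH] hj; first by move=> hk; exact: Ncov _ hk hu.
rewrite doubleS in hj *.
have hj1 : j.*2 < size s by apply: ltn_trans hj.
have hin : vinN N (nth v0 (v0 :: s) j.*2.+1) (nth v0 (v0 :: s) j.*2.+2).
  by apply/(alt_path_edge hp hj).2; rewrite /= odd_double.
have k1 : konig_cover H Z b (nth v0 (v0 :: s) j.*2.+1).
  by case: (konig_cover_edge b hZ.1 (alt_path_edge hp hj1).1) => // /(IH (ltnW hj1)).
by move=> k2; apply: (Ninner _ _ hin).
Qed.

End KonigCover.

Section EvenOddUnreachable.
Context {A Q : finType}.
Implicit Types (H : graph A Q) (N Z X Y : {set A * Q}) (u v w x y : A + Q).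

Lemma odd_konig_cover H v : odd_v H v ->
  exists Z b, is_max_matching H Z /\ konig_cover H Z b v.
Proof.
case=> Z [hZ [v0 [s [hu hp hl ho]]]]; exists Z, (side v0); split => //; right.
by split; [rewrite -hl eq_sym -(alt_path_parity hp) | exists v0, s].
Qed.

Lemma odd_matched H N v : odd_v H v -> is_max_matching H N -> ~ unmatched N v.
Proof.
by case/odd_konig_cover => Z [b [hZ hk]] hN; exact: (konig_cover_tight b hZ hN).1 v hk.
Qed.

Lemma unreach_matched H N v : unreach_v H v -> is_max_matching H N -> ~ unmatched N v.
Proof. by move=> [ne _] hN hv; apply: ne; exists N; split => //; exists v, [::]. Qed.

Lemma odd_not_even H v : odd_v H v -> ~ even_v H v.
Proof.
case/odd_konig_cover => Z [b [hZ hk]] [N [hN [v0 [s [hu hp hl ev]]]]].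
by move: hk; rewrite -hl; exact: even_end_not_konig hZ hN hu hp ev.
Qed.

Lemma even_alt_path H Z v : even_v H v -> is_max_matching H Z ->
  exists v0 s, [/\ unmatched Z v0, alt_path H Z v0 s, last v0 s = v & ~~ odd (size s)].
Proof.
move=> [N [hN [w0 [s [hu hp hl ev]]]]] hZ.
have nk := even_end_not_konig (b := side v) hZ hN hu hp ev; rewrite hl in nk.
have [v0 [s' [v0v hu' hp' hl']]] : reachable_from_side H Z (side v) v.
  by apply: contrapT => nr; apply: nk; left.
by exists v0, s'; split; rewrite // (alt_path_parity hp') hl' v0v eqxx.
Qed.

Lemma even_adj_odd H x y : even_v H x -> vadj H x y -> odd_v H y.
Proof.
move=> [N [hN [v0 [s [hu hp hl ev]]]]] hxy.
have hxy' : vadj H (last v0 s) y by rewrite hl.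
have [s' [hp' hl']] := alt_reachable_even_step hN.1 hu hp ev hxy'.
exists N; split => //; exists v0, s'; split => //.
have v0x : side v0 = side x.
  by move: ev; rewrite (alt_path_parity hp) hl negbK => /eqP.
by rewrite (alt_path_parity hp') hl' v0x; exact: vadj_side hxy.
Qed.

Lemma odd_mate_even H N x y : is_max_matching H N -> vinN N x y ->
  odd_v H x -> even_v H y.
Proof.
move=> hN hxy [Z [hZ [v0 [s [hu hp hl ho]]]]].
case/lastP: s hp hl ho => [|s x'] //; rewrite last_rcons size_rcons /= => hp hl ho.
subst x'.
have hi : size s < size (rcons s x) by rewrite size_rcons.
have [ux _] := alt_path_edge hp hi.
rewrite -rcons_cons nth_rcons /= ltnS leqnn -(last_nth v0) nth_rcons ltnn eqxx in ux.
set u := last v0 s in ux.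
have hps : alt_path H Z v0 s.
  by have := alt_path_take (size s) hp; rewrite -cats1 take_size_cat.
have eu : even_v H u by exists Z; split => //; exists v0, s.
have [w0 [t [hw0 hpt hlt evt]]] := even_alt_path eu hN.
have [hux|hux] := EM (vinN N u x).
  by rewrite (vinN_mate_uniq hN.1 hxy (vinN_sym hux)).
have w0u : side w0 = side u.
  by move: evt; rewrite (alt_path_parity hpt) hlt negbK => /eqP.
have hux' : vadj H (last w0 t) x by rewrite hlt.
have hnot : vinN N (last w0 t) x <-> odd (size t).
  by rewrite hlt; split => [/hux|ot] //; rewrite ot in evt.
have [t' [hpt' hlt']] := alt_reachable_extend hpt hux' hnot.
have ho' : odd (size t') by rewrite (alt_path_parity hpt') hlt' w0u; exact: vadj_side ux.
have hxy' : vinN N (last w0 t') y by rewrite hlt'.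
have [t'' [hpt'' hlt'']] := alt_reachable_odd_step hN.1 hpt' ho' hxy'.
exists N; split => //; exists w0, t''; split => //.
rewrite (alt_path_parity hpt'') hlt'' w0u negbK.
move: (vadj_side ux) (vadj_side (vinN_vadj hN.1 hxy)).
by case: (side u); case: (side x); case: (side y).
Qed.

(* Every edge meets this set, since the neighbours of even vertices are odd;
   a maximum matching covers it without joining two of its vertices, so its
   size is the matching number. *)
Definition ou_applicants H : {set A} :=
  [set a | `[< odd_v H (inl a) \/ unreach_v H (inl a) >]].
Definition odd_posts H : {set Q} := [set q | `[< odd_v H (inr q) >]].

Lemma ou_odd_cover H a q : H a q -> a \in ou_applicants H \/ q \in odd_posts H.
Proof.
move=> haq; rewrite !inE.
have [oq|noq] := EM (odd_v H (inr q)); first by right; apply/asboolP.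
left; apply/asboolP; have [oa|noa] := EM (odd_v H (inl a)); first by left.
by right; split=> // ea; exact: noq (even_adj_odd ea (haq : vadj H (inl a) (inr q))).
Qed.

Lemma max_matching_not_joins_OOU H N e : is_max_matching H N -> e \in N ->
  ~ joins_OOU H e.1 e.2.
Proof.
case: e => a q hN eN.
have haq : vinN N (inl a) (inr q) := eN.
have hqa : vinN N (inr q) (inl a) := eN.
case=> [[oa [oq|[nq _]]]|[oq [oa|[na _]]]].
- exact: odd_not_even oq (odd_mate_even hN haq oa).
- exact: nq (odd_mate_even hN haq oa).
- exact: odd_not_even oa (odd_mate_even hN hqa oq).
- exact: na (odd_mate_even hN hqa oq).
Qed.

Lemma card_matching_le_ou H X : is_matching H X ->
  #|X| <= #|ou_applicants H| + #|odd_posts H|.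
Proof.
move=> hX; apply: (vertex_cover_card (matching_disjoint hX) _).1 => e eX.
exact: ou_odd_cover (matching_edge hX eX).
Qed.

Lemma ou_le_card H Y :
  (forall a, a \in ou_applicants H -> exists2 e, e \in Y & e.1 = a) ->
  (forall q, q \in odd_posts H -> exists2 e, e \in Y & e.2 = q) ->
  (forall e, e \in Y -> ~ joins_OOU H e.1 e.2) ->
  #|ou_applicants H| + #|odd_posts H| <= #|Y|.
Proof.
move=> hA hQ hY; apply: vertex_cover_le_card hA hQ _ => e eY.
by rewrite !inE => -[/asboolP oua /asboolP oq]; apply: (hY e eY); right.
Qed.

End EvenOddUnreachable.

Section IrvingStages.
Context {A P : finType} (r : nat) (rk : A -> P -> nat).
Implicit Types (X Y : {set A * (P + A)}).
(* [G t] is the graph G'_(t+1) of the paper; its edges have rank at most t+1. *)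
Local Notation G t := (irving_stage r rk t).1.
Local Notation alive t := (irving_stage r rk t).2.
Local Notation fr a q := (frk r rk a q).

Definition OU t (v : A + (P + A)) := odd_v (G t) v \/ unreach_v (G t) v.

Lemma stage0 a q : G 0 a q <-> fr a q = 1.
Proof. by []. Qed.

Lemma stageS t a q : G t.+1 a q <->
  (G t a q /\ ~ joins_OOU (G t) a q) \/ (fr a q = t.+2 /\ alive t.+1 a q).
Proof. by []. Qed.

Lemma aliveS t a q : alive t.+1 a q <->
  alive t a q /\ ~ (t.+1 < fr a q /\ (OU t (inl a) \/ OU t (inr q))).
Proof. by []. Qed.

Lemma stage_rank t a q : G t a q -> 0 < fr a q <= t.+1.
Proof.
elim: t => [/stage0 -> //|t IH].
case/stageS => [[/IH /andP [-> le] _]|[-> _]]; last by rewrite leqnn.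
exact: leqW.
Qed.

Lemma stage_Gedge t a q : G t a q -> Gedge r rk a q.
Proof. by case/stage_rank/andP. Qed.

Lemma aliveP t a q : alive t a q <->
  forall t0, t0 < t -> ~ (t0.+1 < fr a q /\ (OU t0 (inl a) \/ OU t0 (inr q))).
Proof.
elim: t => [|t IH]; first by split.
rewrite aliveS; split=> [[/IH al notOU] t0|al]; last first.
  by split; [apply/IH => t0 lt; apply: al; exact: ltnW | exact: al].
by rewrite ltnS leq_eqVlt => /predU1P [->|/al].
Qed.

(* An edge of rank i > 1 of any G'_t was added to G'_i, so it survived the
   deletions of stages 1, ..., i - 1. *)
Lemma stage_edge_alive t a q : G t a q -> 1 < fr a q -> alive (fr a q).-1 a q.
Proof.
elim: t => [/stage0 -> //|t IH].
by case/stageS => [[/IH ih _]|[-> al]]; first exact: ih.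
Qed.

(* What the counting argument at stage t0 needs from an edge: the edges of
   later stages, of the reduced graph and of a rank-maximal matching have it. *)
Definition stage_compatible t0 a q :=
  (fr a q <= t0.+1 -> G t0 a q /\ ~ joins_OOU (G t0) a q) /\
  (OU t0 (inl a) \/ OU t0 (inr q) -> fr a q <= t0.+1).

Lemma stage_compatible_stage t0 t a q : t0 < t -> G t a q -> stage_compatible t0 a q.
Proof.
move=> lt haq; split.
  elim: t lt haq => // t IH; rewrite ltnS leq_eqVlt.
  move=> /predU1P [<-|lt] /stageS [[ht nj]|[-> _]] le //; try by exfalso; lia.
  exact: IH lt ht le.
move=> hOU; rewrite leqNgt; apply/negP => gt.
have /aliveP /(_ t0) := stage_edge_alive haq (leq_ltn_trans (ltn0Sn t0) gt).
by apply; [lia | split].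
Qed.

Lemma stage_compatible_reduced t0 a q : t0 <= r ->
  reduced_graph r rk a q -> stage_compatible t0 a q.
Proof.
rewrite leq_eqVlt => /predU1P [-> red|lt [haq _]].
  by split => // _; case/andP: (stage_rank red.1).
exact: stage_compatible_stage lt haq.
Qed.

Lemma stage_matching_Gedge t X : is_matching (G t) X -> is_matching (Gedge r rk) X.
Proof. by case=> hX h1 h2; split=> // e /hX /stage_Gedge. Qed.

Lemma OU_matched t N v : is_max_matching (G t) N -> OU t v -> ~ unmatched N v.
Proof. by move=> hN [/odd_matched | /unreach_matched]; apply. Qed.

End IrvingStages.

Section RankProfiles.
Context {A P : finType} (r : nat) (rk : A -> P -> nat).
Implicit Types (X Y : {set A * (P + A)}).
Local Notation fr a q := (frk r rk a q).

Lemma matching_rank_pos X : is_matching (Gedge r rk) X -> {in X, forall e, 0 < fr e.1 e.2}.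
Proof. by case=> hX _ _ e /hX. Qed.

Definition edges_upto X s := [set e in X | fr e.1 e.2 <= s].

Lemma mem_edges_upto X s e : (e \in edges_upto X s) = (e \in X) && (fr e.1 e.2 <= s).
Proof. by rewrite inE. Qed.

Lemma edges_upto_sub X s : edges_upto X s \subset X.
Proof. by apply/subsetP => e; rewrite inE => /andP []. Qed.

Lemma edges_upto_subS X s s' : s <= s' -> edges_upto X s \subset edges_upto X s'.
Proof. by move=> ss'; apply/subsetP => e; rewrite !inE => /andP [-> /leq_trans]; apply. Qed.

Lemma edges_upto0 X : {in X, forall e, 0 < fr e.1 e.2} -> edges_upto X 0 = set0.
Proof.
move=> hX; apply/setP => e; rewrite !inE; apply/negP => /andP [eX].
by rewrite leqn0 => /eqP e0; move: (hX e eX); rewrite e0.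
Qed.

Lemma card_edges_uptoS X s : {in X, forall e, 0 < fr e.1 e.2} ->
  #|edges_upto X s.+1| = #|edges_upto X s| + signature r rk X s.+1.
Proof.
move=> hX; rewrite /signature.
set B := [set e in X | _ == _].
have -> : edges_upto X s.+1 = edges_upto X s :|: B.
  by apply/setP => e; rewrite !inE; case: (e \in X) => //=; rewrite leq_eqVlt ltnS orbC.
rewrite cardsU; suff -> : edges_upto X s :&: B = set0 by rewrite cards0 subn0.
apply/setP => e; rewrite !inE.
by apply/negP => /andP [/andP [_ le] /andP [_ /eqP eq]]; rewrite eq ltnn in le.
Qed.

(* The first rank bound at which the counts of X and Y differ is the first
   rank at which their signatures differ. *)
Lemma lex_lt_edges_upto X Y n :
  {in X, forall e, 0 < fr e.1 e.2} -> {in Y, forall e, 0 < fr e.1 e.2} -> n <= r ->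
  (forall s, s < n -> #|edges_upto X s.+1| <= #|edges_upto Y s.+1|) ->
  #|edges_upto X n.+1| < #|edges_upto Y n.+1| ->
  lex_lt r.+1 (signature r rk X) (signature r rk Y).
Proof.
move=> hX hY nr le lt.
have [i lti mini] := ex_minnP (ex_intro (fun s => #|edges_upto X s| < #|edges_upto Y s|) _ lt).
have ilen : i <= n.+1 by apply: mini.
have eq_below j : j < i -> #|edges_upto X j| = #|edges_upto Y j|.
  move=> ji; apply/eqP; rewrite eqn_leq; apply/andP; split.
    case: j ji => [|j] ji; first by rewrite !edges_upto0.
    by apply: le; apply: leq_trans ji ilen.
  by rewrite leqNgt; apply/negP => /mini; rewrite leqNgt ji.
case: i lti mini ilen eq_below => [|i]; first by rewrite !edges_upto0 // ltnn.
move=> lti _ ilen eq_below; exists i.+1; split.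
- by rewrite /= (leq_trans ilen).
- move=> [|j] // /andP [_ ji].
  have := eq_below j.+1 ji; have := eq_below j (ltnW ji).
  rewrite !card_edges_uptoS //; lia.
- have := eq_below i (ltnSn i); move: lti; rewrite !card_edges_uptoS //; lia.
Qed.

Definition edges_above X s := [set e in X | s < fr e.1 e.2].

Lemma card_edges_upto_above X s :
  #|edges_upto X s| + #|edges_above X s| = #|X|.
Proof.
have <- : X :&: edges_upto X s = edges_upto X s.
  by apply/setP => e; rewrite !inE; case: (e \in X).
have <- : X :\: edges_upto X s = edges_above X s.
  by apply/setP => e; rewrite !inE ltnNge; case: (e \in X); case: (_ <= _).
exact: cardsID.
Qed.

Lemma sum_rank_edges_above X : {in X, forall e, fr e.1 e.2 <= r.+1} ->
  \sum_(e in X) fr e.1 e.2 = \sum_(s < r.+1) #|edges_above X s|.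
Proof.
move=> hX.
have min_sum n m : \sum_(s < n) (s < m : nat) = minn n m.
  elim: n => [|n IH]; first by rewrite big_ord0 min0n.
  rewrite big_ord_recr /= IH; case: (ltnP n m) => nm /=; lia.
transitivity (\sum_(e in X) \sum_(s < r.+1) (s < fr e.1 e.2 : nat)).
  by apply: eq_bigr => e eX; rewrite min_sum; apply/esym/minn_idPr/hX.
rewrite exchange_big; apply: eq_bigr => s _.
rewrite -sum1_card big_mkcond [RHS]big_mkcond; apply: eq_bigr => e _.
by rewrite inE; case: (e \in X); case: (s < _).
Qed.

Lemma sum_rank_eq X Y :
  {in X, forall e, 0 < fr e.1 e.2 <= r.+1} -> {in Y, forall e, 0 < fr e.1 e.2 <= r.+1} ->
  (forall s, s <= r -> #|edges_upto X s.+1| = #|edges_upto Y s.+1|) ->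
  \sum_(e in X) fr e.1 e.2 = \sum_(e in Y) fr e.1 e.2.
Proof.
move=> hX hY eqXY.
have [posX leX] : {in X, forall e, 0 < fr e.1 e.2} /\ {in X, forall e, fr e.1 e.2 <= r.+1}.
  by split=> e /hX /andP [].
have [posY leY] : {in Y, forall e, 0 < fr e.1 e.2} /\ {in Y, forall e, fr e.1 e.2 <= r.+1}.
  by split=> e /hY /andP [].
have full (Z : {set A * (P + A)}) : {in Z, forall e, fr e.1 e.2 <= r.+1} -> edges_upto Z r.+1 = Z.
  by move=> hZ; apply/setP => e; rewrite inE; case: (boolP (e \in Z)) => //= /hZ.
have cardXY : #|X| = #|Y| by rewrite -(full X leX) -(full Y leY) eqXY.
rewrite !sum_rank_edges_above //; apply: eq_bigr => -[s /= slt] _.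
have uptoXY : #|edges_upto X s| = #|edges_upto Y s|.
  by case: s slt => [|s] slt; [rewrite !edges_upto0 | exact: eqXY (ltnW slt)].
have := card_edges_upto_above X s; have := card_edges_upto_above Y s.
by rewrite uptoXY cardXY => <-; exact: addnI.
Qed.

End RankProfiles.

Section RankMaximal.
Context {A P : finType} (r : nat) (rk : A -> P -> nat).
Variable M : {set A * (P + A)}.
Hypothesis hM : rank_maximal r rk M.
Implicit Types (X Y : {set A * (P + A)}).
Local Notation G t := (irving_stage r rk t).1.
Local Notation fr a q := (frk r rk a q).
Local Notation upto := (edges_upto r rk).
Local Notation compatible := (stage_compatible r rk).

Lemma rank_maximal_no_dominating Y n : is_matching (Gedge r rk) Y -> n <= r ->
  (forall s, s < n -> #|upto M s.+1| <= #|upto Y s.+1|) ->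
  ~ #|upto M n.+1| < #|upto Y n.+1|.
Proof.
move=> hY nr le lt; apply: hM.2; exists Y; split => //.
exact: lex_lt_edges_upto (matching_rank_pos hM.1) (matching_rank_pos hY) nr le lt.
Qed.

Lemma max_stage_compatible t0 e : is_max_matching (G t0) (upto M t0.+1) ->
  e \in M -> compatible t0 e.1 e.2.
Proof.
move=> hmax eM; split => [le|hOU].
  have eup : e \in upto M t0.+1 by rewrite mem_edges_upto eM le.
  split; last exact: max_matching_not_joins_OOU hmax eup.
  exact: (matching_edge hmax.1 eup).
have [v ev vOU] : exists2 v, incident e v & OU r rk t0 v.
  by case: hOU => vOU; [exists (inl e.1); first left | exists (inr e.2); first right].
have /matchedE [f fup fv] := OU_matched hmax vOU.
move: fup; rewrite mem_edges_upto => /andP [fM le].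
by rewrite (matching_disjoint hM.1 eM fM ev fv).
Qed.

(* The core counting step: compare both sets with the size of the cover
   O u U (applicants) + O (posts) of G'_(t0+1). *)
Lemma card_upto_le_compatible t0 Y : is_max_matching (G t0) (upto M t0.+1) ->
  (forall v, ~ unmatched (upto M t0.+1) v -> ~ unmatched Y v) ->
  {in Y, forall g, compatible t0 g.1 g.2} ->
  #|upto M t0.+1| <= #|upto Y t0.+1|.
Proof.
move=> hmax cov compat.
have covY v : OU r rk t0 v -> exists2 g, g \in upto Y t0.+1 & incident g v.
  move=> vOU; have /cov /matchedE [g gY gv] := OU_matched hmax vOU.
  exists g => //; rewrite mem_edges_upto gY; apply: (compat g gY).2.
  by case: gv vOU => ->; [left | right].
apply: leq_trans (card_matching_le_ou hmax.1) _; apply: ou_le_card.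
- by move=> a; rewrite inE => /asboolP /covY [g gY /incident_inl]; exists g.
- by move=> q; rewrite inE => /asboolP oq; have [g gY /incident_inr] := covY _ (or_introl oq); exists g.
- by move=> g; rewrite mem_edges_upto => /andP [gY le]; exact: ((compat g gY).1 le).2.
Qed.

Lemma upto_stage_matching t :
  (forall t0, t0 <= t -> is_max_matching (G t0) (upto M t0.+1)) ->
  is_matching (G t.+1) (upto M t.+2).
Proof.
move=> hmax; apply: disjoint_matching; last first.
  exact: disjoint_edgesS (edges_upto_sub _ _ _ _) (matching_disjoint hM.1).
move=> e; rewrite mem_edges_upto => /andP [eM]; rewrite leq_eqVlt => /predU1P [re|le].
  apply/stageS; right; split=> //; apply/aliveP => t0 lt [gt hOU].
  by have := (max_stage_compatible (hmax t0 lt) eM).2 hOU; lia.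
by apply/stageS; left; exact: (max_stage_compatible (hmax t (leqnn t)) eM).1 le.
Qed.

(* A larger matching of G'_(t+1) would give, through a maximum matching
   covering M's vertices, a matching beating M's signature. *)
Lemma upto_stage_max_of_matching t : t <= r -> is_matching (G t) (upto M t.+1) ->
  (forall t0, t0 < t -> is_max_matching (G t0) (upto M t0.+1)) ->
  is_max_matching (G t) (upto M t.+1).
Proof.
move=> tr hm hmax; split=> // X hX; rewrite leqNgt; apply/negP => lt.
have [Z0 hZ0] := exists_max_matching (G t).
have [Z hZ covZ] := max_matching_covering hm hZ0.
have XZ : #|X| <= #|Z| := leq_trans (hZ0.2 X hX) (hZ.2 Z0 hZ0.1).
have ZG e : e \in Z -> G t e.1 e.2 := matching_edge hZ.1.
have fullZ : upto Z t.+1 = Z.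
  apply/setP => e; rewrite mem_edges_upto.
  by case: (boolP (e \in Z)) => //= /ZG /stage_rank /andP [].
apply: (rank_maximal_no_dominating (stage_matching_Gedge hZ.1) tr) => [s st|].
  apply: card_upto_le_compatible (hmax s st) _ _ => [v vM|g /ZG]; last exact: stage_compatible_stage.
  by apply: covZ; apply: matched_sub vM; apply: edges_upto_subS; lia.
by rewrite fullZ (leq_trans lt XZ).
Qed.

Lemma upto_stage_max t : t <= r -> is_max_matching (G t) (upto M t.+1).
Proof.
move: t; suff below n : n <= r -> forall t, t <= n -> is_max_matching (G t) (upto M t.+1).
  by move=> t tr; exact: below tr t (leqnn t).
elim: n => [|n IH] nr t.
  rewrite leqn0 => /eqP ->; apply: upto_stage_max_of_matching => //.
  apply: disjoint_matching; last first.
    exact: disjoint_edgesS (edges_upto_sub _ _ _ _) (matching_disjoint hM.1).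
  move=> e; rewrite mem_edges_upto => /andP [eM le]; apply/stage0.
  by apply/eqP; rewrite eqn_leq le (matching_rank_pos hM.1 eM).
have IH' := IH (ltnW nr).
rewrite leq_eqVlt => /predU1P [->|]; last by rewrite ltnS; exact: IH'.
apply: (upto_stage_max_of_matching nr (upto_stage_matching IH')) => t0.
by rewrite ltnS; exact: IH'.
Qed.

Lemma rank_maximal_compatible t0 e : t0 <= r -> e \in M -> compatible t0 e.1 e.2.
Proof. by move=> tr; apply: max_stage_compatible (upto_stage_max tr). Qed.

Lemma card_upto_eq_compatible Y : is_matching (Gedge r rk) Y ->
  (forall v, ~ unmatched M v -> ~ unmatched Y v) ->
  (forall t0, t0 <= r -> {in Y, forall g, compatible t0 g.1 g.2}) ->
  forall s, s <= r -> #|upto M s.+1| = #|upto Y s.+1|.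
Proof.
move=> hY cov compat.
have le s : s <= r -> #|upto M s.+1| <= #|upto Y s.+1|.
  move=> sr; apply: card_upto_le_compatible (upto_stage_max sr) _ (compat s sr) => v vM.
  by apply: cov; apply: matched_sub vM; exact: edges_upto_sub.
move=> s sr; apply/eqP; rewrite eqn_leq le //= leqNgt; apply/negP.
apply: (rank_maximal_no_dominating hY sr) => s' s's.
by apply: le; apply: leq_trans (ltnW s's) sr.
Qed.

End RankMaximal.

Section SwitchingCycle.
Context {A P : finType} (r : nat) (rk : A -> P -> nat).
Hypothesis hrk : forall a p, rk a p <= r.
Variables (M : {set A * (P + A)}) (k : nat).
Variables (p : 'I_k.+1 -> P + A) (a : 'I_k.+1 -> A).
Hypotheses (hM : rank_maximal r rk M) (hp : injective p).
Hypothesis hC : forall i, sw_edge r rk M (a i) (p i) (p (ordS i)).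
Local Notation fr a q := (frk r rk a q).

Definition cycle_old := [set (a i, p i) | i : 'I_k.+1].
Definition cycle_new := [set (a i, p (ordS i)) | i : 'I_k.+1].
Definition switched := (M :\: cycle_old) :|: cycle_new.

Lemma mem_cycle_old i : (a i, p i) \in cycle_old.
Proof. by apply/imsetP; exists i. Qed.

Lemma mem_cycle_new i : (a i, p (ordS i)) \in cycle_new.
Proof. by apply/imsetP; exists i. Qed.

Lemma frk_le x q : fr x q <= r.+1.
Proof. by case: q => [q|b] /=; [exact: leqW | case: eqP]. Qed.

Lemma cycle_old_sub : cycle_old \subset M.
Proof. by apply/subsetP => _ /imsetP [i _ ->]; case: (hC i). Qed.

Lemma cycle_applicant_inj : injective a.
Proof.
move=> i j aij; apply: hp.
have /subsetP sub := cycle_old_sub.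
have := matching_disjoint hM.1 (sub _ (mem_cycle_old i)) (sub _ (mem_cycle_old j)).
by move=> /(_ (inl (a i)) (or_introl erefl) (or_introl (congr1 inl aij))) [].
Qed.

Lemma cycle_new_incident i z : incident (a i, p (ordS i)) z ->
  exists2 f, f \in cycle_old & incident f z.
Proof.
case=> /= ->; first by exists (a i, p i); [exact: mem_cycle_old | left].
by exists (a (ordS i), p (ordS i)); [exact: mem_cycle_old | right].
Qed.

Lemma switched_rest_new e f z : e \in M :\: cycle_old -> f \in cycle_new ->
  incident e z -> incident f z -> False.
Proof.
rewrite in_setD => /andP [eold eM] /imsetP [i _ ->] ez /cycle_new_incident [g gold gz].
have eg := matching_disjoint hM.1 eM (subsetP cycle_old_sub g gold) ez gz.
by rewrite eg gold in eold.
Qed.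

Lemma switched_matching : is_matching (Gedge r rk) switched.
Proof.
apply: disjoint_matching => [e|e f z].
  rewrite in_setU in_setD => /orP [/andP [_ eM]|/imsetP [i _ ->]].
    exact: (matching_edge hM.1 eM).
  by case: (hC i) => _ [/stage_Gedge].
rewrite !in_setU => /orP [eR|eN] /orP [fR|fN] ez fz.
- move: eR fR; rewrite !in_setD => /andP [_ eM] /andP [_ fM].
  exact: (matching_disjoint hM.1 eM fM ez fz).
- by case: (switched_rest_new eR fN ez fz).
- by case: (switched_rest_new fR eN fz ez).
- case/imsetP: eN fN ez fz => i _ -> /imsetP [j _ ->] [] -> [] //= [].
    by move/cycle_applicant_inj ->.
  by move/hp/ordS_inj ->.
Qed.

Lemma switched_covers v : ~ unmatched M v -> ~ unmatched switched v.
Proof.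
case/matchedE => f fM fv; apply/matchedE.
have [fold|fnew] := boolP (f \in cycle_old); last first.
  by exists f; rewrite // in_setU in_setD fnew fM.
case/imsetP: fold fv => i _ -> [] /= ->.
  by exists (a i, p (ordS i)); [rewrite in_setU mem_cycle_new orbT | left].
exists (a (ord_pred i), p (ordS (ord_pred i))); last by right; rewrite /= ord_predK.
by rewrite in_setU mem_cycle_new orbT.
Qed.

Lemma switched_compatible t0 : t0 <= r ->
  {in switched, forall g, stage_compatible r rk t0 g.1 g.2}.
Proof.
move=> tr g; rewrite in_setU in_setD => /orP [/andP [_ gM]|/imsetP [i _ ->]].
  exact: (rank_maximal_compatible hM tr gM).
by case: (hC i) => _ /(stage_compatible_reduced tr).
Qed.

Lemma sum_rank_switched : \sum_(e in M) fr e.1 e.2 = \sum_(e in switched) fr e.1 e.2.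
Proof.
apply: sum_rank_eq => [e eM|e eS|].
- by rewrite frk_le (matching_rank_pos hM.1 eM).
- by rewrite frk_le (matching_rank_pos switched_matching eS).
exact: (card_upto_eq_compatible hM switched_matching switched_covers switched_compatible).
Qed.

Lemma sum_rank_cycle : \sum_i fr (a i) (p (ordS i)) = \sum_i fr (a i) (p i).
Proof.
have old : \sum_(e in cycle_old) fr e.1 e.2 = \sum_i fr (a i) (p i).
  rewrite big_imset /=; first by apply: eq_bigl => i; rewrite inE.
  by move=> i j _ _ [_ /hp].
have new : \sum_(e in cycle_new) fr e.1 e.2 = \sum_i fr (a i) (p (ordS i)).
  rewrite big_imset /=; first by apply: eq_bigl => i; rewrite inE.
  by move=> i j _ _ [_ /hp /ordS_inj].
have := sum_rank_switched.
rewrite (big_setID cycle_old) [X in _ = X](big_setID cycle_new) /=.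
have -> : M :&: cycle_old = cycle_old by apply/setIidPr; exact: cycle_old_sub.
have -> : switched :&: cycle_new = cycle_new by apply/setIidPr/subsetP => e eN; rewrite in_setU eN orbT.
have -> : switched :\: cycle_new = M :\: cycle_old.
  apply/setP => e; rewrite in_setD in_setU.
  case eN: (e \in cycle_new); case eR: (e \in M :\: cycle_old) => //=.
  by case: (switched_rest_new eR eN (or_introl erefl) (or_introl erefl)).
by rewrite old new => /addIn.
Qed.

End SwitchingCycle.

Unset Implicit Arguments.
Local Open Scope ring_scope.

Theorem lemma3 (A P : finType) (r : nat) (rk : A -> P -> nat)
  (hrk : forall a p, (rk a p <= r)%N)
  (M : {set A * (P + A)%type}) (hM : rank_maximal r rk M)
  (k : nat) (p : 'I_k.+1 -> (P + A)%type) (a : 'I_k.+1 -> A)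
  (hp : injective p)
  (hC : forall i, sw_edge r rk M (a i) (p i) (p (ordS i))) :
  \sum_(i < k.+1) sw_weight r rk (a i) (p i) (p (ordS i)) = 0.
Proof.
rewrite /sw_weight sumrB -!(big_morph Posz PoszD (erefl 0%:Z)).
by rewrite (sum_rank_cycle hrk hM hp hC) subrr.
Qed.
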